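(* For every $\varepsilon>0$ there exists a nonsplit characteristically nilpotent Lie algebra $\mathfrak{h}$ such that \[\frac{\dim\mathfrak{h}-\dim Z(\mathfrak{h})}{\dim Z(\mathfrak{h})}<\varepsilon.\]
   Context: All Lie algebras are finite-dimensional and complex. $Z(\mathfrak{h})$ denotes the center. A Lie algebra is nonsplit if it is not the direct sum of two nonzero ideals. A nilpotent Lie algebra $\mathfrak{g}$ is characteristically nilpotent if there is $m$ with $\mathfrak{g}^{[m]}=0$, where $\mathfrak{g}^{[1]}=\{f(Y): f\in \mathrm{Der}(\mathfrak{g}), Y\in\mathfrak{g}\}$ and $\mathfrak{g}^{[k]}=\mathrm{Der}(\mathfrak{g})(\mathfrak{g}^{[k-1]})$ (equivalently, $\mathrm{Der}(\mathfrak{g})$ is nilpotent). *)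

From HB Require Import structures.
From mathcomp Require Import all_boot all_order all_algebra.
From mathcomp Require Import reals complex.
Set Implicit Arguments. Unset Strict Implicit. Unset Printing Implicit Defensive.
Import Order.TTheory GRing.Theory Num.Theory.
Local Open Scope ring_scope.

(* A finite-dimensional Lie algebra over a field K of dimension n is modelled on
   the coordinate space 'rV[K]_n with a bracket br. *)
Section Lie.
Variable K : fieldType.
Variable n : nat.
Notation V := 'rV[K]_n.
Implicit Types (br : V -> V -> V).

Definition is_lie_bracket br : Prop :=
  [/\ (forall (a : K) x y z, br (a *: x + y) z = a *: br x z + br y z),
      (forall (a : K) x y z, br x (a *: y + z) = a *: br x y + br x z),
      (forall x, br x x = 0)
    & (forall x y z, br x (br y z) + br y (br z x) + br z (br x y) = 0)].

Definition is_center_mx br (Z : 'M[K]_n) : Prop :=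
  forall x : V, (x <= Z)%MS <-> (forall y, br x y = 0).

(* ideals, represented by the row space of a square matrix *)
Definition is_ideal br (I : 'M[K]_n) : Prop :=
  forall x y : V, (x <= I)%MS -> (br x y <= I)%MS.

Definition nonsplit br : Prop :=
  ~ exists I J : 'M[K]_n,
      is_ideal br I /\ is_ideal br J /\ I != 0 /\ J != 0 /\
      (I + J == (1%:M : 'M[K]_n))%MS /\ (I :&: J == (0 : 'M[K]_n))%MS.

(* nilpotent: some term of the lower central series vanishes, i.e. all
   brackets [x1,[x2,...,[xk,y]...]] of a fixed length vanish *)
Definition nilpotent br : Prop :=
  exists k : nat, forall (xs : seq V) (y : V), size xs = k -> foldr br y xs = 0.

Definition is_derivation br (D : 'M[K]_n) : Prop :=
  forall x y : V, br x y *m D = br (x *m D) y + br x (y *m D).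

(* g^[m] = 0 : every composite of m derivations applied to any Y is zero *)
Definition char_nilpotent br : Prop :=
  nilpotent br /\
  exists m : nat, forall (Ds : seq 'M[K]_n) (Y : V),
      size Ds = m -> (forall D, D \in Ds -> is_derivation br D) ->
      foldl (@mulmx K 1 n n) Y Ds = 0.
End Lie.

From HB Require Import structures.
From mathcomp Require Import all_boot all_order all_algebra.
From mathcomp Require Import reals complex.
From mathcomp Require Import zify ring lra.

(* Let d >= 5 be odd. The Lie algebra h_d has basis X1..X7, V_i (i in Z/d) and W_ij for the
   pairs i < j that are not adjacent in the cycle Z/d, with nonzero brackets
   [X1,Xk] = X(k+1), [X2,X3] = X6 + X7, [X2,X4] = X7, [V_i,V_(i+1)] = X7, [V_i,V_j] = W_ij:
   a 7-dimensional characteristically nilpotent filiform algebra and a free 2-step nilpotent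
   algebra on the V_i, glued along X7. With weights X_k : k, V_i : 3, W_ij : 6 the bracket adds
   weights, and all weights are at most 7, so h_d is nilpotent.
   Every derivation D strictly raises weight. As h_d is generated by X1, X2 and the V_i, it
   suffices to check this on them. On X1, X2 it is the classical computation for the filiform
   part. As D X7 = 0, the relations [V_i,V_(i+1)] = X7 read in the W-coordinates force
   D V_i = l_i V_i + (higher terms) with l_i + l_(i+1) = 0, and around the odd cycle l_i = 0.
   The same computation shows that every map commuting with all brackets is a scalar plus a
   weight-raising, hence nilpotent, map. The projection onto a direct summand ideal is such a
   map, so one of the summands is zero.
   The center is spanned by X7 and the W_ij, so it has dimension d(d-3)/2 + 1 while
   dim h_d - dim Z(h_d) = d + 6. *)

Set Implicit Arguments. Unset Strict Implicit. Unset Printing Implicit Defensive.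
Import Order.TTheory GRing.Theory Num.Theory.
Local Open Scope ring_scope.

Lemma nilpotent_eigenvector (K : fieldType) (n : nat) (N : 'M[K]_n) m c (x : 'rV[K]_n) :
  N ^+ m = 0 -> c != 0 -> x *m N = c *: x -> x = 0.
Proof.
move=> Nm0 c0 xN; have xNk k : x *m N ^+ k = c ^+ k *: x.
  elim: k => [|k IH]; first by rewrite expr0 mulmx1 scale1r.
  by rewrite exprSr -mulmxE mulmxA IH -scalemxAl xN scalerA -exprSr.
have /esym/eqP := xNk m; rewrite Nm0 mulmx0 scaler_eq0 expf_eq0 (negbTE c0) andbF.
by move/eqP.
Qed.

Section CyclicOrdinal.
Variable n : nat.

Lemma val_iter_ordS k (i : 'I_n) : val (iter k (@ordS n) i) = ((i + k) %% n)%N.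
Proof.
elim: k => [|k IH] /=; first by rewrite addn0 modn_small.
by rewrite IH -addn1 modnDml -addnA addn1.
Qed.

Lemma iter_ordS_period (i : 'I_n) : iter n (@ordS n) i = i.
Proof. by apply: val_inj; rewrite val_iter_ordS modnDr modn_small. Qed.

Lemma alternating_odd_cycle (K : fieldType) (f : 'I_n -> K) : odd n -> 2%:R != 0 :> K ->
  (forall i, f i + f (ordS i) = 0) -> forall i, f i = 0.
Proof.
move=> odd_n two0 alt i; have fk k : f (iter k (@ordS n) i) = (-1) ^+ k * f i.
  elim: k => [|k IH]; first by rewrite mul1r.
  have /eqP := alt (iter k (@ordS n) i).
  by rewrite IH addrC addr_eq0 iterS => /eqP ->; rewrite exprS; ring.
have := fk n; rewrite iter_ordS_period -signr_odd odd_n expr1 => /eqP.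
by rewrite mulN1r -subr_eq0 opprK -mulr2n -mulr_natl mulf_eq0 (negbTE two0) => /eqP.
Qed.

Hypothesis n_gt4 : (4 < n)%N.

Lemma iter_ordS_neq k (i : 'I_n) : (0 < k < 5)%N -> iter k (@ordS n) i != i.
Proof.
move=> /andP[k_gt0 k_lt5]; apply/eqP => /(congr1 val); rewrite val_iter_ordS /=.
have i_lt := ltn_ord i; case: (ltnP (i + k) n) => ikn; first by rewrite modn_small; lia.
by rewrite -(subnK ikn) modnDr modn_small; lia.
Qed.

Lemma ordS_neq (i : 'I_n) :
  [/\ ordS i != i, ordS (ordS i) != i, ordS (ordS (ordS i)) != i
    & ordS (ordS (ordS (ordS i))) != i].
Proof.
by split; [apply: (iter_ordS_neq (k := 1)) | apply: (iter_ordS_neq (k := 2))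
          | apply: (iter_ordS_neq (k := 3)) | apply: (iter_ordS_neq (k := 4))].
Qed.

Lemma ord_pred_neq_ordS (i : 'I_n) : ord_pred i != ordS i.
Proof. by have [_ SSi _ _] := ordS_neq (ord_pred i); rewrite ord_predK eq_sym in SSi. Qed.

End CyclicOrdinal.

Lemma sum_delta (K : fieldType) n (F : 'I_n -> K) i : \sum_j (i == j)%:R * F j = F i.
Proof.
rewrite (bigD1 i) //= eqxx mul1r big1 ?addr0 // => j ji.
by rewrite eq_sym (negbTE ji) mul0r.
Qed.

Section LieBracket.
Variables (K : fieldType) (n : nat) (br : 'rV[K]_n -> 'rV[K]_n -> 'rV[K]_n).
Hypothesis br_lie : is_lie_bracket br.

Lemma lie_addl x y z : br (x + y) z = br x z + br y z.
Proof. by have [linl _ _ _] := br_lie; have := linl 1 x y z; rewrite !scale1r. Qed.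

Lemma lie_addr x y z : br x (y + z) = br x y + br x z.
Proof. by have [_ linr _ _] := br_lie; have := linr 1 x y z; rewrite !scale1r. Qed.

Lemma lie_anti x y : br x y = - br y x.
Proof.
have [_ _ alt _] := br_lie; apply/eqP; rewrite -addr_eq0; apply/eqP.
by have := alt (x + y); rewrite lie_addl !lie_addr !alt add0r addr0 => ->.
Qed.

Lemma summand_proj_centroid (I J : 'M[K]_n) :
    is_ideal br I -> is_ideal br J ->
    (I + J == (1%:M : 'M_n))%MS -> (I :&: J == (0 : 'M_n))%MS ->
  (forall x y, br x y *m proj_mx I J = br (x *m proj_mx I J) y) /\
  (forall x y, br x y *m proj_mx I J = br x (y *m proj_mx I J)).
Proof.
move=> idI idJ /andP[_ IJ1] /andP[IJ0 _]; set P := proj_mx I J.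
have capIJ : (I :&: J = 0)%MS by apply/eqP; rewrite -submx0.
have inIJ (x : 'rV_n) : (x <= I + J)%MS by apply: submx_trans IJ1; apply: submx1.
have brIJ u v : (u <= I)%MS -> (v <= J)%MS -> br u v = 0.
  move=> uI vJ; apply/eqP; rewrite -submx0 -capIJ sub_capmx idI //.
  by rewrite lie_anti eqmx_opp idJ.
have splitP (x : 'rV_n) : x = x *m P + (x - x *m P) by rewrite addrC subrK.
have PI (x : 'rV_n) : (x *m P <= I)%MS by apply: proj_mx_sub.
have PJ (x : 'rV_n) : (x - x *m P <= J)%MS by apply/proj_mx_compl_sub/inIJ.
have Pl x y : br x y *m P = br (x *m P) y.
  move: (PI x) (PJ x) (PI y) (PJ y) (splitP x) (splitP y).
  move: (x *m P) (x - x *m P) (y *m P) (y - y *m P) => x1 x2 y1 y2 x1I x2J y1I y2J -> ->.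
  rewrite !(lie_addl, lie_addr) (brIJ x1 y2) // (lie_anti x2) (brIJ y1 x2) //.
  rewrite oppr0 addr0 add0r mulmxDl (proj_mx_id capIJ) ?idI //.
  by rewrite (proj_mx_0 capIJ) ?addr0 // idJ.
by split=> // x y; rewrite lie_anti mulNmx Pl -lie_anti.
Qed.

Lemma nonsplit_of_centroid :
    (forall P : 'M[K]_n, (forall x y, br x y *m P = br (x *m P) y) ->
       (forall x y, br x y *m P = br x (y *m P)) -> exists lam m, (P - lam%:M) ^+ m = 0) ->
  nonsplit br.
Proof.
(* P is the identity on I and zero on J while P - lam is nilpotent: lam = 1 forces J = 0 and
   lam != 1 forces I = 0. *)
move=> centroid [I [J [idI [idJ [I0 [J0 [IJ1 IJ0]]]]]]].
have [Pl Pr] := summand_proj_centroid idI idJ IJ1 IJ0.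
have [lam [m Nm]] := centroid _ Pl Pr.
have capIJ : (I :&: J = 0)%MS by apply/eqP; rewrite -submx0; case/andP: IJ0.
have xN (x : 'rV_n) : x *m (proj_mx I J - lam%:M) = x *m proj_mx I J - lam *: x.
  by rewrite mulmxBr mul_mx_scalar.
have mx0 (A : 'M_n) : (forall x : 'rV_n, (x <= A)%MS -> x = 0) -> A = 0.
  by move=> A0; apply/row_matrixP => i; rewrite row0; apply/A0/row_sub.
case: (eqVneq lam 1) => [lam1 | lam_neq1].
- move/eqP: J0; apply; apply: mx0 => y yJ.
  apply: (nilpotent_eigenvector Nm (c := -1)); first by rewrite oppr_eq0 oner_eq0.
  by rewrite xN (proj_mx_0 capIJ yJ) lam1 sub0r scaleN1r scale1r.
- move/eqP: I0; apply; apply: mx0 => x xI.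
  apply: (nilpotent_eigenvector Nm (c := 1 - lam)); first by rewrite subr_eq0 eq_sym.
  by rewrite xN (proj_mx_id capIJ xI) scalerBl scale1r.
Qed.

End LieBracket.

Section Construction.
Variable K : fieldType.
Variable d : nat.

Definition adjacent (i j : 'I_d) := (j == ordS i) || (i == ordS j).
Definition far_pair (p : 'I_d * 'I_d) := (p.1 < p.2)%N && ~~ adjacent p.1 p.2.
Definition far_pairs := {p : 'I_d * 'I_d | far_pair p}.

Definition idx : finType := ('I_7 + ('I_d + far_pairs))%type.

(* X k is X_(k+1), and W p is W_ij for p = (i, j). *)
Definition X (k : 'I_7) : idx := inl k.
Definition V (i : 'I_d) : idx := inr (inl i).
Definition W (p : far_pairs) : idx := inr (inr p).
Local Notation X1 := (X (@Ordinal 7 0 isT)).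
Local Notation X2 := (X (@Ordinal 7 1 isT)).
Local Notation X3 := (X (@Ordinal 7 2 isT)).
Local Notation X4 := (X (@Ordinal 7 3 isT)).
Local Notation X5 := (X (@Ordinal 7 4 isT)).
Local Notation X6 := (X (@Ordinal 7 5 isT)).
Local Notation X7 := (X (@Ordinal 7 6 isT)).

Implicit Types (f g h : idx -> K) (a b c s t : idx).

(* Elements of h_d are handled as coordinate functions idx -> K. *)
Definition minor f g a b := f a * g b - f b * g a.

Definition cyc_form f g := \sum_(i < d) minor f g (V i) (V (ordS i)).

Definition fbr f g t : K :=
  match t with
  | inl k => match val k with
    | 2 => minor f g X1 X2
    | 3 => minor f g X1 X3
    | 4 => minor f g X1 X4
    | 5 => minor f g X1 X5 + minor f g X2 X3
    | 6 => minor f g X1 X6 + minor f g X2 X3 + minor f g X2 X4 + cyc_form f g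
    | _ => 0 end
  | inr (inl _) => 0
  | inr (inr p) => minor f g (V (val p).1) (V (val p).2)
  end.

Definition delta a t : K := (a == t)%:R.

Ltac case_idx := case=> [[[|[|[|[|[|[|[|?]]]]]]] ?]|[?|?]].

Lemma fbr_ext f f' g g' : f =1 f' -> g =1 g' -> fbr f g =1 fbr f' g'.
Proof.
move=> ef eg; have em a b : minor f g a b = minor f' g' a b by rewrite /minor !ef !eg.
have ec : cyc_form f g = cyc_form f' g' by apply: eq_bigr => i _; apply: em.
by case_idx; rewrite //= ?em ?ec.
Qed.

Lemma fbr_linl k f g h : fbr (fun s => k * f s + g s) h =1 (fun t => k * fbr f h t + fbr g h t).
Proof.
have em a b : minor (fun s => k * f s + g s) h a b = k * minor f h a b + minor g h a b.
  by rewrite /minor; ring.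
have ec : cyc_form (fun s => k * f s + g s) h = k * cyc_form f h + cyc_form g h.
  by rewrite /cyc_form mulr_sumr -big_split; apply: eq_bigr => i _; apply: em.
by case_idx; rewrite /= ?em ?ec; ring.
Qed.

Lemma fbrC f g : fbr f g =1 (fun t => - fbr g f t).
Proof.
have em a b : minor f g a b = - minor g f a b by rewrite /minor; ring.
have ec : cyc_form f g = - cyc_form g f.
  by rewrite /cyc_form -sumrN; apply: eq_bigr => i _; apply: em.
by case_idx; rewrite /= ?em ?ec; ring.
Qed.

Lemma fbrxx f : fbr f f =1 (fun=> 0).
Proof.
have em a b : minor f f a b = 0 by rewrite /minor; ring.
have ec : cyc_form f f = 0 by apply: big1 => i _; apply: em.
by case_idx; rewrite /= ?em ?ec; ring.
Qed.

Lemma fbr_linr k f g h : fbr h (fun s => k * f s + g s) =1 (fun t => k * fbr h f t + fbr h g t).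
Proof. by move=> t; rewrite fbrC fbr_linl (fbrC f) (fbrC g); ring. Qed.

(* The cyclic term only reads V-coordinates, and brackets have none. *)
Lemma fbr_jacobi f g h :
  (fun t => fbr f (fbr g h) t + fbr g (fbr h f) t + fbr h (fbr f g) t) =1 (fun=> 0).
Proof.
have ec f' g' h' : cyc_form f' (fbr g' h') = 0.
  by apply: big1 => i _; rewrite /minor /= !mulr0 subrr.
by case_idx; rewrite /= ?ec; unfold minor; simpl; unfold minor; ring.
Qed.

Local Notation n := #|idx|.

Definition coord (x : 'rV[K]_n) t := x 0 (enum_rank t).
Definition vec f : 'rV[K]_n := \row_k f (enum_val k).
Definition hbr x y := vec (fbr (coord x) (coord y)).
Definition coord_mx (D : 'M[K]_n) a s := D (enum_rank a) (enum_rank s).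

Lemma vecK f : coord (vec f) =1 f.
Proof. by move=> t; rewrite /coord mxE enum_rankK. Qed.

Lemma coordK x : vec (coord x) = x.
Proof. by apply/rowP => k; rewrite mxE /coord enum_valK. Qed.

Lemma coord_inj x y : coord x =1 coord y -> x = y.
Proof. by move=> exy; rewrite -[x]coordK -[y]coordK; apply/rowP => k; rewrite !mxE exy. Qed.

Lemma coord0 t : coord 0 t = 0.
Proof. by rewrite /coord mxE. Qed.

Lemma coordD x y t : coord (x + y) t = coord x t + coord y t.
Proof. by rewrite /coord mxE. Qed.

Lemma coordZ k x t : coord (k *: x) t = k * coord x t.
Proof. by rewrite /coord mxE. Qed.

Lemma coord_hbr x y : coord (hbr x y) =1 fbr (coord x) (coord y).
Proof. exact: vecK. Qed.

Lemma coord_mul x D s : coord (x *m D) s = \sum_t coord x t * coord_mx D t s.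
Proof.
rewrite /coord mxE (reindex (@enum_rank idx)) //=.
by exists enum_val => i _; rewrite ?enum_rankK ?enum_valK.
Qed.

Lemma hbr_lie : is_lie_bracket hbr.
Proof.
have coord_lin k x y t : coord (k *: x + y) t = k * coord x t + coord y t.
  by rewrite coordD coordZ.
split=> [k x y z | k x y z | x | x y z]; apply: coord_inj => t.
- by rewrite coord_lin !coord_hbr -fbr_linl; apply: fbr_ext.
- by rewrite coord_lin !coord_hbr -fbr_linr; apply: fbr_ext.
- by rewrite coord_hbr fbrxx coord0.
- rewrite !coordD !coord_hbr coord0 -(fbr_jacobi (coord x) (coord y) (coord z) t).
  by congr (_ + _ + _); apply: fbr_ext => // s; rewrite coord_hbr.
Qed.

Definition weight t : nat :=
  match t with inl k => k.+1 | inr (inl _) => 3 | inr (inr _) => 6 end.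

Definition wt_ge p f := forall s, (weight s < p)%N -> f s = 0.

Definition wt_raising (M : idx -> idx -> K) := forall a, wt_ge (weight a).+1 (M a).

Lemma wt_ge1 f : wt_ge 1 f.
Proof. by case_idx. Qed.

Lemma wt_ge8 f : wt_ge 8 f -> f =1 (fun=> 0).
Proof. by move=> f8; case_idx => *; apply: f8. Qed.

Lemma wt_ge_delta a : wt_ge (weight a) (delta a).
Proof. by move=> s; rewrite /delta; case: eqP => // ->; rewrite ltnn. Qed.

Lemma fbr_wt_ge p q f g : wt_ge p f -> wt_ge q g -> wt_ge (p + q) (fbr f g).
Proof.
move=> fp gq.
have m0 a b w : (weight a + weight b <= w)%N -> (w < p + q)%N -> f a * g b = 0.
  move=> abw wpq; case: (ltnP (weight a) p) => ap; first by rewrite fp ?mul0r.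
  by rewrite gq ?mulr0 //; lia.
have minor0 a b w : (weight a + weight b <= w)%N -> (w < p + q)%N -> minor f g a b = 0.
  by move=> abw wpq; rewrite /minor !(m0 _ _ w) ?subrr // addnC.
case_idx => //= wpq; rewrite ?(minor0 _ _ _ _ wpq) ?add0r //.
by apply: big1 => i _; rewrite (minor0 _ _ _ _ wpq).
Qed.

Lemma wt_raising_mul D p x :
  wt_raising (coord_mx D) -> wt_ge p (coord x) -> wt_ge p.+1 (coord (x *m D)).
Proof.
move=> rD xp s sp; rewrite coord_mul big1 // => t _.
case: (ltnP (weight t) p) => tp; first by rewrite xp ?mul0r.
by rewrite rD ?mulr0 //; lia.
Qed.

Lemma wt_raising_nilpotent D : wt_raising (coord_mx D) -> D ^+ 7 = 0.
Proof.
move=> rD; have xDk k x : wt_ge k.+1 (coord (x *m D ^+ k)).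
  elim: k => [|k IH]; first exact: wt_ge1.
  by rewrite exprSr -mulmxE mulmxA; apply: wt_raising_mul.
apply/row_matrixP => i; rewrite row0 -[D ^+ 7]mul1mx row_mul.
by apply: coord_inj => t; rewrite coord0 (wt_ge8 (xDk 7 _)).
Qed.

Lemma hbr_nilpotent : nilpotent hbr.
Proof.
exists 7 => xs y size_xs; apply: coord_inj => t; rewrite coord0.
suff : wt_ge (size xs).+1 (coord (foldr hbr y xs)) by rewrite size_xs => /wt_ge8.
elim: xs {size_xs} => [|x xs IH] /=; first exact: wt_ge1.
by move=> s s_xs; rewrite coord_hbr (fbr_wt_ge (wt_ge1 _) IH).
Qed.

Definition fmulmx (M : idx -> idx -> K) f s := \sum_t f t * M t s.

Definition fderivation M := forall a b,
  fmulmx M (fbr (delta a) (delta b)) =1 (fun s => fbr (M a) (delta b) s + fbr (delta a) (M b) s).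

Definition fcentroid M := forall a b,
  fmulmx M (fbr (delta a) (delta b)) =1 fbr (M a) (delta b) /\
  fmulmx M (fbr (delta a) (delta b)) =1 fbr (delta a) (M b).

Lemma fmulmx_ext M f f' : f =1 f' -> fmulmx M f =1 fmulmx M f'.
Proof. by move=> ef s; apply: eq_bigr => t _; rewrite ef. Qed.

Lemma fmulmx_delta M a : fmulmx M (delta a) =1 M a.
Proof.
move=> s; rewrite /fmulmx (bigD1 a) //= big1 ?addr0 => [|t ta]; first by rewrite /delta eqxx mul1r.
by rewrite /delta eq_sym (negbTE ta) mul0r.
Qed.

Lemma fmulmxD M f g : fmulmx M (fun t => f t + g t) =1 (fun s => fmulmx M f s + fmulmx M g s).
Proof. by move=> s; rewrite /fmulmx -big_split; apply: eq_bigr => t _; rewrite mulrDl. Qed.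

Lemma fmulmx0 M : fmulmx M (fun=> 0) =1 (fun=> 0).
Proof. by move=> s; apply: big1 => t _; rewrite mul0r. Qed.

Lemma coord_vec_mul f D : coord (vec f *m D) =1 fmulmx (coord_mx D) f.
Proof. by move=> s; rewrite coord_mul; apply: eq_bigr => t _; rewrite vecK. Qed.

Lemma coord_delta_mul a D : coord (vec (delta a) *m D) =1 coord_mx D a.
Proof. by move=> s; rewrite coord_vec_mul fmulmx_delta. Qed.

Lemma coord_hbr_delta_mul a b D :
  coord (hbr (vec (delta a)) (vec (delta b)) *m D) =1 fmulmx (coord_mx D) (fbr (delta a) (delta b)).
Proof. by move=> s; rewrite coord_vec_mul; apply: fmulmx_ext; apply: fbr_ext; apply: vecK. Qed.

Lemma mx_fderivation D : is_derivation hbr D -> fderivation (coord_mx D).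
Proof.
move=> dD a b s; rewrite -coord_hbr_delta_mul dD coordD !coord_hbr.
by congr (_ + _); apply: fbr_ext => // t; rewrite ?coord_delta_mul ?vecK.
Qed.

Lemma mx_fcentroid D :
    (forall x y, hbr x y *m D = hbr (x *m D) y) -> (forall x y, hbr x y *m D = hbr x (y *m D)) ->
  fcentroid (coord_mx D).
Proof.
move=> Dl Dr a b; split=> s; rewrite -coord_hbr_delta_mul; [rewrite Dl | rewrite Dr];
  by rewrite coord_hbr; apply: fbr_ext => // t; rewrite ?coord_delta_mul ?vecK.
Qed.

Lemma eq_V i j : (V i == V j) = (i == j). Proof. by []. Qed.

Lemma far_pairP i j : i != j -> ~~ adjacent i j -> exists r,
  (forall f g, fbr f g (W r) = minor f g (V i) (V j)) \/
  (forall f g, fbr f g (W r) = - minor f g (V i) (V j)).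
Proof.
move=> ij adj_ij; have minorC f g a b : minor f g a b = - minor f g b a by rewrite /minor; ring.
case: (ltngtP i j) => [lt_ij | lt_ji | /val_inj eq_ij]; last by rewrite eq_ij eqxx in ij.
- have rP : far_pair (i, j) by rewrite /far_pair lt_ij.
  by exists (exist far_pair _ rP); left.
- have rP : far_pair (j, i) by rewrite /far_pair lt_ji /adjacent orbC.
  by exists (exist far_pair _ rP); right => f g; rewrite /= minorC.
Qed.

Lemma cyc_form_deltaVl i g : cyc_form (delta (V i)) g = g (V (ordS i)) - g (V (ord_pred i)).
Proof.
rewrite /cyc_form /minor sumrB; congr (_ - _).
  by rewrite -(sum_delta (fun j => g (V (ordS j)))); apply: eq_bigr.
rewrite -(sum_delta (fun j => g (V j))); apply: eq_bigr => j _; rewrite /delta eq_V.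
suff -> : (i == ordS j) = (ord_pred i == j) by [].
by apply/eqP/eqP => [-> | <-]; rewrite ?ordSK ?ord_predK.
Qed.

Lemma cyc_form_deltaXl k g : cyc_form (delta (X k)) g = 0.
Proof. by apply: big1 => i _; rewrite /minor /delta /= !mul0r subrr. Qed.

Lemma cyc_form_deltaXr k f : cyc_form f (delta (X k)) = 0.
Proof. by apply: big1 => i _; rewrite /minor /delta /= !mulr0 subrr. Qed.

Ltac structure_constants :=
  case_idx; rewrite /= ?cyc_form_deltaXl ?cyc_form_deltaXr /minor /delta /=; ring.

Lemma fbr_X1X2 : fbr (delta X1) (delta X2) =1 delta X3. Proof. structure_constants. Qed.
Lemma fbr_X1X3 : fbr (delta X1) (delta X3) =1 delta X4. Proof. structure_constants. Qed.
Lemma fbr_X1X4 : fbr (delta X1) (delta X4) =1 delta X5. Proof. structure_constants. Qed.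
Lemma fbr_X1X5 : fbr (delta X1) (delta X5) =1 delta X6. Proof. structure_constants. Qed.
Lemma fbr_X1X6 : fbr (delta X1) (delta X6) =1 delta X7. Proof. structure_constants. Qed.
Lemma fbr_X2X3 : fbr (delta X2) (delta X3) =1 (fun t => delta X6 t + delta X7 t).
Proof. structure_constants. Qed.
Lemma fbr_X2X5 : fbr (delta X2) (delta X5) =1 (fun=> 0). Proof. structure_constants. Qed.

Lemma minor_delta a b u v :
  minor (delta a) (delta b) u v = ((a == u) && (b == v))%:R - ((a == v) && (b == u))%:R.
Proof. by rewrite /minor /delta -!natrM !mulnb. Qed.

Lemma fbr_V_far r : fbr (delta (V (val r).1)) (delta (V (val r).2)) =1 delta (W r).
Proof.
case: r => [[i j] rP].
have := rP; rewrite /far_pair /adjacent /= => /andP[lt_ij /norP[/negbTE ji /negbTE ij]].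
case=> [[[|[|[|[|[|[|[|?]]]]]]] ?]|[?|[[k l] qP]]] //=;
  rewrite ?cyc_form_deltaVl ?minor_delta /delta //= ?eq_V ?ij; try ring.
  have pj : (j == ord_pred i) = false by apply: contraFF ij => /eqP ->; rewrite ord_predK.
  by rewrite ji pj; ring.
have /andP[/= lt_kl _] := qP; rewrite (_ : (i == l) && (j == k) = false) ?subr0.
  by congr (_%:R); apply/andP/eqP => [[/eqP -> /eqP ->] | [-> ->]] //; congr (W _); apply: val_inj.
by apply/negbTE/andP => -[/eqP il /eqP jk]; move: lt_ij lt_kl; rewrite il jk; lia.
Qed.

Lemma fbr_V_X1 i : fbr (delta (V i)) (delta X1) =1 (fun=> 0).
Proof. structure_constants. Qed.

Lemma fbr_V_X2 i : fbr (delta (V i)) (delta X2) =1 (fun=> 0).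
Proof. structure_constants. Qed.

Lemma fbr_deltaVl_X7 i g : fbr (delta (V i)) g X7 = g (V (ordS i)) - g (V (ord_pred i)).
Proof. by rewrite /= cyc_form_deltaVl /minor /delta /=; ring. Qed.

Lemma fbr_deltaVr_X7 i f : fbr f (delta (V i)) X7 = f (V (ord_pred i)) - f (V (ordS i)).
Proof. by rewrite fbrC fbr_deltaVl_X7 opprB. Qed.

Section LongCycle.
Hypothesis d_gt4 : (4 < d)%N.

Lemma fbr_V_ordS i : fbr (delta (V i)) (delta (V (ordS i))) =1 delta X7.
Proof.
case=> [[[|[|[|[|[|[|[|?]]]]]]] ?]|[?|[[k l] qP]]] //=;
  rewrite ?cyc_form_deltaVl ?minor_delta /delta //= ?eq_V; try ring.
  by rewrite eqxx eq_sym (negbTE (ord_pred_neq_ordS d_gt4 i)) /=; ring.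
have := qP; rewrite /far_pair /adjacent /= => /andP[_ /norP[lk kl]].
have ikl : (i == k) && (ordS i == l) = false.
  by apply/negbTE/andP => -[/eqP ik /eqP il]; rewrite -ik -il eqxx in lk.
have ilk : (i == l) && (ordS i == k) = false.
  by apply/negbTE/andP => -[/eqP il /eqP ik]; rewrite -ik -il eqxx in kl.
by rewrite ikl ilk subrr.
Qed.

(* The W-coordinate for the pair {m, i+1}, or {i-1, m} when m is i+1 or i+2, isolates
   M (V i) (V m). *)
Lemma V_offdiag_eq0 (M : idx -> idx -> K) e : e != 0 ->
    (forall i r, fbr (M (V i)) (delta (V (ordS i))) (W r) =
                 e * fbr (delta (V i)) (M (V (ordS i))) (W r)) ->
  forall i m, m != i -> M (V i) (V m) = 0.
Proof.
move=> e0 tie i m mi; have Sinj := inj_eq (@ordS_inj d).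
have [m_far | /negbNE m_near] := boolP (~~ ((m == ordS i) || (m == ordS (ordS i)))).
- have [n1 _ _ _] := ordS_neq d_gt4 i; have /norP[mSi mSSi] := m_far.
  have adj : ~~ adjacent m (ordS i) by rewrite /adjacent Sinj eq_sym (negbTE mi) (negbTE mSSi).
  have [r [] Wr] := far_pairP mSi adj; have := tie i r; rewrite !Wr /minor /delta /= !eq_V;
    rewrite eqxx eq_sym (negbTE mSi) eq_sym (negbTE mi) eq_sym (negbTE n1) /=;
    by rewrite ?(mulr1, mulr0, mul0r, subr0, subrr, oppr0) => /eqP; rewrite ?oppr_eq0 => /eqP ->.
- have [j Sj] : exists j, i = ordS j by exists (ord_pred i); rewrite ord_predK.
  have [/negbTE n1 /negbTE n2 /negbTE n3 /negbTE n4] := ordS_neq d_gt4 j; rewrite Sj in mi m_near *.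
  have [jm adj] : j != m /\ ~~ adjacent j m.
    by case/orP: m_near => /eqP ->; rewrite /adjacent !Sinj !(eq_sym j) ?n1 ?n2 ?n3 ?n4.
  have Sjm : (ordS j == m) = false by rewrite eq_sym (negbTE mi).
  have [r [] Wr] := far_pairP jm adj; have := tie j r; rewrite !Wr /minor /delta /= !eq_V;
    rewrite eqxx Sjm n1 (negbTE jm) ?(mulr1, mulr0, mul0r, mul1r, subr0, subrr, oppr0, mulrN);
    by move=> /esym/eqP; rewrite ?oppr_eq0 mulf_eq0 (negbTE e0) => /eqP.
Qed.

Section Derivation.
Variable M : idx -> idx -> K.
Hypothesis dM : fderivation M.

Lemma fderivation_basis a b c : fbr (delta a) (delta b) =1 delta c ->
  M c =1 (fun s => fbr (M a) (delta b) s + fbr (delta a) (M b) s).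
Proof. by move=> abc s; rewrite -fmulmx_delta -(fmulmx_ext _ abc) dM. Qed.

(* With a = M X1 X1 and b = M X2 X2, the chain [X1,Xk] = X(k+1) gives M Xk Xk = (k-2)a + b and
   kills the lower entries involved, so that the X6- and X7-coordinates of D[X2,X3] = D X6 + D X7
   read b = 3a and b = 4a, and its X4-coordinate reads M X2 X1 = 0. *)
Lemma fderivation_X1_X2 : [/\ M X1 X1 = 0, M X2 X1 = 0 & M X2 X2 = 0].
Proof.
have D3 := fderivation_basis fbr_X1X2; have D4 := fderivation_basis fbr_X1X3.
have D5 := fderivation_basis fbr_X1X4; have D6 := fderivation_basis fbr_X1X5.
have D7 := fderivation_basis fbr_X1X6.
have D67 s : M X6 s + M X7 s = fbr (M X2) (delta X3) s + fbr (delta X2) (M X3) s.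
  by rewrite -!fmulmx_delta -fmulmxD -(fmulmx_ext _ fbr_X2X3) dM.
move: (D3 X2) (D3 X3) (D3 X4) (D4 X2) (D4 X3) (D4 X4) (D4 X5) (D5 X2) (D5 X3) (D5 X4)
  (D5 X5) (D5 X6) (D6 X3) (D6 X4) (D6 X5) (D6 X6) (D6 X7) (D7 X4) (D7 X6) (D7 X7)
  (D67 X4) (D67 X6) (D67 X7).
rewrite /= ?cyc_form_deltaXl ?cyc_form_deltaXr /minor /delta /=.
rewrite ?(mulr0, mul0r, mulr1, mul1r, subr0, sub0r, addr0, add0r, oppr0).
move=> -> -> -> -> -> -> -> -> -> -> -> -> -> -> -> -> -> -> -> -> /esym.
rewrite add0r => M21 G6 G7.
have comb (x u v u' v' c c' : K) : u = v -> u' = v' -> x = c * (u - v) + c' * (u' - v') -> x = 0.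
  by move=> -> -> ->; rewrite !subrr !mulr0 addr0.
have M11 : M X1 X1 = 0 by apply: (comb _ _ _ _ _ (-1) 1 G6 G7); ring.
by split=> //; apply: (comb _ _ _ _ _ (-4) 3 G6 G7); ring.
Qed.

Lemma fderivation_wt a b c : fbr (delta a) (delta b) =1 delta c ->
    (weight a + weight b = weight c)%N ->
  wt_ge (weight a).+1 (M a) -> wt_ge (weight b).+1 (M b) -> wt_ge (weight c).+1 (M c).
Proof.
move=> abc wc Ma Mb s s_c; rewrite (fderivation_basis abc).
rewrite (fbr_wt_ge Ma (@wt_ge_delta b)) ?(fbr_wt_ge (@wt_ge_delta a) Mb) ?addr0 //; lia.
Qed.

Lemma fderivation_raises_X k : wt_ge (weight (X k)).+1 (M (X k)).
Proof.
have [M11 M21 M22] := fderivation_X1_X2.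
have M1 : wt_ge 2 (M X1) by case=> [[[|j] j_lt]|[?|?]] //= _; rewrite (bool_irrelevance j_lt isT).
have M2 : wt_ge 3 (M X2).
  by case=> [[[|[|j]] j_lt]|[?|?]] //= _; rewrite (bool_irrelevance j_lt isT).
have M3 := fderivation_wt fbr_X1X2 erefl M1 M2.
have M4 := fderivation_wt fbr_X1X3 erefl M1 M3.
have M5 := fderivation_wt fbr_X1X4 erefl M1 M4.
have M6 := fderivation_wt fbr_X1X5 erefl M1 M5.
have M7 := fderivation_wt fbr_X1X6 erefl M1 M6.
by case: k => [[|[|[|[|[|[|[|k]]]]]]] k_lt] //; rewrite (bool_irrelevance k_lt isT).
Qed.

Lemma fderivation_V_X123 i : [/\ M (V i) X1 = 0, M (V i) X2 = 0 & M (V i) X3 = 0].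
Proof.
have z1 s : fbr (M (V i)) (delta X1) s + fbr (delta (V i)) (M X1) s = 0.
  by rewrite -dM (fmulmx_ext _ (fbr_V_X1 i)) fmulmx0.
have z2 s : fbr (M (V i)) (delta X2) s + fbr (delta (V i)) (M X2) s = 0.
  by rewrite -dM (fmulmx_ext _ (fbr_V_X2 i)) fmulmx0.
move: (z2 X3) (z1 X3) (z1 X4); rewrite /= /minor /delta /=.
rewrite !(mulr0, mul0r, mulr1, subr0, sub0r, addr0).
by move=> -> /eqP; rewrite oppr_eq0 => /eqP -> /eqP; rewrite oppr_eq0 => /eqP ->.
Qed.

Hypothesis d_odd : odd d.
Hypothesis two_neq0 : 2%:R != 0 :> K.

Lemma fderivation_raises_V i : wt_ge 4 (M (V i)).
Proof.
have M7 := wt_ge8 (@fderivation_raises_X (Ordinal (isT : 6 < 7)%N)).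
have tie j s : fbr (M (V j)) (delta (V (ordS j))) s + fbr (delta (V j)) (M (V (ordS j))) s = 0.
  by rewrite -(fderivation_basis (fbr_V_ordS j)) M7.
have off j m : m != j -> M (V j) (V m) = 0.
  apply: (V_offdiag_eq0 (e := -1)) => [|{}j r]; first by rewrite oppr_eq0 oner_eq0.
  by apply/eqP; rewrite mulN1r -subr_eq0 opprK tie.
have diag j : M (V j) (V j) = 0.
  apply: (alternating_odd_cycle (f := fun j => M (V j) (V j))) => // {}j.
  have [_ SSj _ _] := ordS_neq d_gt4 j.
  have := tie j X7; rewrite fbr_deltaVr_X7 fbr_deltaVl_X7 ordSK.
  rewrite (off j (ordS (ordS j))) // (off (ordS j) (ord_pred j)) ?subr0 //.
  exact: ord_pred_neq_ordS.
have [M1 M2 M3] := fderivation_V_X123 i.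
case=> [[[|[|[|k]]] k_lt]|[m|?]] //= _; rewrite ?(bool_irrelevance k_lt isT) //.
by have [->|mi] := eqVneq m i; [apply: diag | apply: off].
Qed.

Lemma fderivation_wt_raising : wt_raising M.
Proof.
case=> [k|[i|r]]; [exact: fderivation_raises_X | exact: fderivation_raises_V |].
by apply: (fderivation_wt (fbr_V_far r)) => //; apply: fderivation_raises_V.
Qed.

End Derivation.

Section Centroid.
Variable M : idx -> idx -> K.
Hypothesis cM : fcentroid M.
Local Notation N := (fun a s => M a s - M X1 X1 * delta a s).

Lemma fcentroid_basis a b c : fbr (delta a) (delta b) =1 delta c ->
  M c =1 fbr (M a) (delta b) /\ M c =1 fbr (delta a) (M b).
Proof.
move=> abc; have [cMl cMr] := cM a b.
by split=> s; rewrite -fmulmx_delta -(fmulmx_ext _ abc); [apply: cMl | apply: cMr].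
Qed.

Lemma fcentroid_wt a b c : fbr (delta a) (delta b) =1 delta c ->
    (weight a + weight b = weight c)%N ->
  wt_ge (weight a).+1 (N a) -> wt_ge (weight c).+1 (N c).
Proof.
move=> abc wc Na s s_c; have [Mc _] := fcentroid_basis abc.
have Ma : M a =1 (fun t => M X1 X1 * delta a t + N a t) by move=> t; ring.
rewrite Mc (fbr_ext Ma (frefl _)) fbr_linl abc addrC addKr.
by rewrite (fbr_wt_ge Na (@wt_ge_delta b)) //; lia.
Qed.

Lemma fcentroid_raises_X k : wt_ge (weight (X k)).+1 (N (X k)).
Proof.
have M21 : M X2 X1 = 0.
  have [cMl _] := cM X2 X5; have := cMl X6.
  rewrite (fmulmx_ext _ fbr_X2X5) fmulmx0 /= /minor /delta /=.
  by rewrite !(mulr0, mulr1, subr0, addr0) => <-.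
have M22 : M X2 X2 = M X1 X1.
  have [D3l D3r] := fcentroid_basis fbr_X1X2; move: (D3l X3) (D3r X3).
  by rewrite /= /minor /delta /= !(mulr0, mulr1, mul0r, mul1r, subr0) => ->.
have N1 : wt_ge 2 (N X1).
  by case=> [[[|j] j_lt]|[?|?]] //= _; rewrite (bool_irrelevance j_lt isT) /delta /=; ring.
have N2 : wt_ge 3 (N X2).
  case=> [[[|[|j]] j_lt]|[?|?]] //= _; rewrite (bool_irrelevance j_lt isT) /delta /=.
    by rewrite M21; ring.
  by rewrite M22; ring.
have N3 := fcentroid_wt fbr_X1X2 erefl N1.
have N4 := fcentroid_wt fbr_X1X3 erefl N1.
have N5 := fcentroid_wt fbr_X1X4 erefl N1.
have N6 := fcentroid_wt fbr_X1X5 erefl N1.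
have N7 := fcentroid_wt fbr_X1X6 erefl N1.
by case: k => [[|[|[|[|[|[|[|k]]]]]]] k_lt] //; rewrite (bool_irrelevance k_lt isT).
Qed.

Lemma fcentroid_raises_V i : wt_ge 4 (N (V i)).
Proof.
have M7 : M X7 X7 = M X1 X1.
  have [D7 _] := fcentroid_basis fbr_X1X6; rewrite D7 /= cyc_form_deltaXr /minor /delta /=; ring.
have tie j : fbr (M (V j)) (delta (V (ordS j))) =1 fbr (delta (V j)) (M (V (ordS j))).
  by move=> s; have [<- <-] := fcentroid_basis (fbr_V_ordS j).
have off j m : m != j -> M (V j) (V m) = 0.
  by apply: (V_offdiag_eq0 (e := 1)) => [|{}j r]; rewrite ?oner_eq0 ?mul1r ?tie.
have diag : M (V i) (V i) = M X1 X1.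
  have [D7 _] := fcentroid_basis (fbr_V_ordS i); have [_ SSi _ _] := ordS_neq d_gt4 i.
  by rewrite -M7 D7 fbr_deltaVr_X7 ordSK (off i (ordS (ordS i))) // subr0.
have low : [/\ M (V i) X1 = 0, M (V i) X2 = 0 & M (V i) X3 = 0].
  have z1 s : fbr (M (V i)) (delta X1) s = 0.
    by have [cMl _] := cM (V i) X1; rewrite -cMl (fmulmx_ext _ (fbr_V_X1 i)) fmulmx0.
  have z2 s : fbr (M (V i)) (delta X2) s = 0.
    by have [cMl _] := cM (V i) X2; rewrite -cMl (fmulmx_ext _ (fbr_V_X2 i)) fmulmx0.
  move: (z2 X3) (z1 X3) (z1 X4); rewrite /= /minor /delta /= !(mulr0, mulr1, subr0, sub0r).
  by move=> -> /eqP; rewrite oppr_eq0 => /eqP -> /eqP; rewrite oppr_eq0 => /eqP ->.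
have [M1 M2 M3] := low; rewrite /delta.
case=> [[[|[|[|k]]] k_lt]|[m|?]] //= _; rewrite ?(bool_irrelevance k_lt isT) ?M1 ?M2 ?M3; try ring.
have [->|mi] := eqVneq m i; first by rewrite eqxx diag /=; ring.
by rewrite off // eq_V eq_sym (negbTE mi) /=; ring.
Qed.

Lemma fcentroid_wt_raising : wt_raising N.
Proof.
case=> [k|[i|r]]; [exact: fcentroid_raises_X | exact: fcentroid_raises_V |].
by apply: (fcentroid_wt (fbr_V_far r)) => //; apply: fcentroid_raises_V.
Qed.

End Centroid.

Definition central t : bool :=
  match t with inl k => val k == 6 | inr (inl _) => false | inr (inr _) => true end.

Definition center_mx : 'M[K]_n := \matrix_(i, j) ((i == j) && central (enum_val i))%:R.

Lemma sub_center_mx x : (x <= center_mx)%MS <-> forall t, ~~ central t -> coord x t = 0.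
Proof.
split=> [/submxP[w ->] t t_nc | x_c].
  rewrite /coord mxE big1 // => j _; rewrite mxE.
  by case: eqP => [->|_]; rewrite ?enum_rankK ?(negbTE t_nc) mulr0.
have -> : x = x *m center_mx; last exact: submxMl.
apply/rowP => k; rewrite mxE (bigD1 k) //= big1 ?addr0 => [|j /negbTE jk]; last first.
  by rewrite mxE jk mulr0.
rewrite mxE eqxx /=; case: (boolP (central (enum_val k))) => [_ | k_nc]; first by rewrite mulr1.
by move: (x_c _ k_nc); rewrite /coord enum_valK => ->; rewrite mul0r.
Qed.

Lemma fbr_central f g : (forall s, ~~ central s -> f s = 0) -> fbr f g =1 (fun=> 0).
Proof.
move=> f_c; have fX (k : 'I_7) : (k < 6)%N -> f (X k) = 0.
  by move=> k6; apply: f_c; rewrite /= neq_ltn k6.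
have fV i : f (V i) = 0 by apply: f_c.
have c0 : cyc_form f g = 0 by apply: big1 => i _; rewrite /minor !fV !mul0r subrr.
by case_idx; rewrite /= ?c0 /minor ?fX ?fV //; ring.
Qed.

Lemma hbr_center : is_center_mx hbr center_mx.
Proof.
move=> x; rewrite sub_center_mx; split=> [x_c y | xy t].
  by apply: coord_inj => t; rewrite coord_hbr coord0; apply: fbr_central.
have e b s : fbr (coord x) (delta b) s = 0.
  by rewrite -(fbr_ext (frefl _) (vecK (delta b))) -coord_hbr xy coord0.
have e' b s : fbr (delta b) (coord x) s = 0 by rewrite fbrC e oppr0.
have xX (k : 'I_7) : (k < 6)%N -> coord x (X k) = 0.
  case: k => [[|[|[|[|[|[|k]]]]]] k_lt] // _; rewrite (bool_irrelevance k_lt isT);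
    [move: (e X2 X3) | move: (e' X1 X3) | move: (e' X1 X4) | move: (e' X1 X5) | move: (e' X1 X6)
    | move: (e' X1 X7)]; rewrite /= ?cyc_form_deltaXl /minor /delta /=;
    by rewrite ?(mulr0, mulr1, mul0r, mul1r, subr0, addr0) => ->.
case: t => [k /= k6 | [m _ | //]]; first by apply: xX; move: k6 (ltn_ord k); lia.
have [/negbTE n1 n2 /negbTE n3 _] := ordS_neq d_gt4 m.
have mSSm : m != ordS (ordS m) by rewrite eq_sym.
have adj : ~~ adjacent m (ordS (ordS m)) by rewrite /adjacent (inj_eq (@ordS_inj d)) n1 eq_sym n3.
have [r [] Wr] := far_pairP mSSm adj; have := e (V (ordS (ordS m))) (W r);
  rewrite Wr /minor /delta /= !eq_V eqxx (negbTE n2) mulr1 mulr0 subr0;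
  by move=> /eqP; rewrite ?oppr_eq0 => /eqP.
Qed.

Lemma rank_center_mx : \rank center_mx = #|[pred t | central t]|.
Proof.
set S := (\sum_(t | central t) <<delta_mx 0 (enum_rank t) : 'rV[K]_n>>)%MS.
have -> : \rank center_mx = \rank S.
  apply/eqmx_rank/andP; split.
    apply/row_subP => i; case: (boolP (central (enum_val i))) => [i_c | i_nc].
      have -> : row i center_mx = delta_mx 0 (enum_rank (enum_val i)).
        by apply/rowP => j; rewrite !mxE enum_valK i_c andbT eqxx eq_sym.
      by apply: (sumsmx_sup (enum_val i)) => //; rewrite genmxE.
    have -> : row i center_mx = 0 by apply/rowP => j; rewrite !mxE (negbTE i_nc) andbF.
    exact: sub0mx.
  apply/sumsmx_subP => t t_c; rewrite genmxE; apply/sub_center_mx => s s_nc.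
  rewrite /coord mxE (inj_eq enum_rank_inj) eqxx andTb; case: eqP => // ts.
  by rewrite -ts (negbTE s_nc) in t_c.
have /mxdirectP -> /= := @mxdirect_delta K idx (fun t => central t) n (@enum_rank idx)
  (in2W (@enum_rank_inj idx)).
by rewrite (eq_bigr (fun _ => 1%N)) => [|t _]; rewrite ?sum1_card ?mxrank_gen ?mxrank_delta.
Qed.

Lemma card_central : #|[pred t | central t]| = #|{: far_pairs}|.+1.
Proof.
pose emb (o : option far_pairs) : idx := if o is Some r then W r else X7.
have emb_inj : injective emb by move=> [r|] [q|] //= [->].
rewrite -card_option -(card_codom emb_inj); apply: eq_card => t; rewrite !inE.
apply/idP/codomP => [|[[r|] ->]] //.
case: t => [[k k_lt] /eqP /= k6|[//|r _]]; last by exists (Some r).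
by exists None; rewrite /emb /X; congr inl; apply: val_inj.
Qed.

Lemma card_idx : #|idx| = (7 + (d + #|{: far_pairs}|))%N.
Proof. by rewrite !card_sum !card_ord. Qed.

Lemma hbr_char_nilpotent : odd d -> 2%:R != 0 :> K -> char_nilpotent hbr.
Proof.
move=> d_odd two0; split; first exact: hbr_nilpotent.
exists 7 => Ds Y size_Ds derDs; apply: coord_inj => t; rewrite coord0.
suff : wt_ge (size Ds).+1 (coord (foldl (@mulmx K 1 n n) Y Ds)) by rewrite size_Ds => /wt_ge8.
elim/last_ind: Ds derDs {size_Ds} => [|Ds D IH] derDs; first exact: wt_ge1.
have derD : is_derivation hbr D by apply: derDs; rewrite mem_rcons mem_head.
rewrite foldl_rcons size_rcons; apply: wt_raising_mul.
  exact: fderivation_wt_raising (mx_fderivation derD) d_odd two0.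
by apply: IH => D' D'_in; apply: derDs; rewrite mem_rcons in_cons D'_in orbT.
Qed.

Lemma hbr_nonsplit : nonsplit hbr.
Proof.
apply: nonsplit_of_centroid => [|P Pl Pr]; first exact: hbr_lie.
exists (coord_mx P X1 X1), 7; apply: wt_raising_nilpotent => a s s_a.
have := fcentroid_wt_raising (mx_fcentroid Pl Pr) s_a.
by rewrite /coord_mx !mxE (inj_eq enum_rank_inj) mulr_natr.
Qed.

End LongCycle.

End Construction.

Lemma card_far_pairs_ge d k : (2 * k + 3 <= d)%N -> (k * k <= #|{: far_pairs d}|)%N.
Proof.
(* The pairs (s + 1, k + 2 + t) for s, t < k. *)
move=> kd; have lo (s : 'I_k) : (s.+1 < d)%N by have := ltn_ord s; lia.
have hi (t : 'I_k) : (k + 2 + t < d)%N by have := ltn_ord t; lia.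
have far st : far_pair (Ordinal (lo st.1), Ordinal (hi st.2)).
  case: st => s t; have := ltn_ord s; have := ltn_ord t => t_lt s_lt.
  rewrite /far_pair /adjacent /= negb_or; apply/and3P; split; first lia.
    by apply/eqP => /(congr1 val) /=; rewrite modn_small; lia.
  by apply/eqP => /(congr1 val) /=; rewrite modn_small; lia.
pose emb st : far_pairs d := exist (@far_pair d) _ (far st).
have emb_inj : injective emb.
  by move=> [s t] [s' t'] /(congr1 val) [/= ss' tt']; congr pair; apply: val_inj => /=; lia.
by have := leq_card emb emb_inj; rewrite card_prod card_ord.
Qed.

Lemma linear_over_quadratic_lt (R : archiRealFieldType) (eps : R) : 0 < eps ->
  exists2 k, (0 < k)%N & forall p, (k * k <= p)%N -> (2 * k + 9)%:R / p.+1%:R < eps.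
Proof.
move=> eps0; pose k := (Num.bound (11 / eps)).+1.
have k_eps : 11 < k%:R * eps.
  rewrite -ltr_pdivrMr //; apply: lt_trans (archi_boundP _) _; last by rewrite ltr_nat.
  by rewrite divr_ge0 // ltW.
exists k => // p kp; rewrite ltr_pdivrMr ?ltr0Sn //.
have kk_p : (k * k)%:R <= p%:R :> R by rewrite ler_nat.
have k9 : (2 * k + 9)%:R <= 11 * k%:R :> R by rewrite -natrM ler_nat; lia.
have k1 : 1 <= k%:R :> R by rewrite ler1n.
rewrite natrM in kk_p; rewrite -addn1 natrD; nra.
Qed.

Local Open Scope complex_scope.

Theorem mainTheorem2 (R : realType) (eps : R) : 0 < eps ->
  exists (n : nat) (br : 'rV[R[i]]_n -> 'rV[R[i]]_n -> 'rV[R[i]]_n),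
    [/\ is_lie_bracket br, nonsplit br, char_nilpotent br &
    exists Z : 'M[R[i]]_n, is_center_mx br Z /\ (0 < \rank Z)%N /\
      ((n - \rank Z)%N%:R / (\rank Z)%:R < eps)%R].
Proof.
move=> eps0; have [k k_gt0 ratio_lt] := linear_over_quadratic_lt eps0.
pose d := (2 * k + 3)%N; have d_gt4 : (4 < d)%N by lia.
have d_odd : odd d by rewrite oddD oddM.
exists #|idx d|, (@hbr R[i] d); split.
- exact: hbr_lie.
- exact: hbr_nonsplit.
- by apply: hbr_char_nilpotent; rewrite ?pnatr_eq0.
exists (center_mx R[i] d); split; first exact: hbr_center.
rewrite rank_center_mx // card_central card_idx; split=> //.
have -> : (7 + (d + #|{: far_pairs d}|) - #|{: far_pairs d}|.+1 = 2 * k + 9)%N by lia.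
by apply: ratio_lt; apply: card_far_pairs_ge.
Qed.
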